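(* Let $k\ge 0$ be an integer and $d=2\cdot 2^{2k}$. Let $r$ be an odd positive integer with $r\ge\lceil\sqrt d\,\rceil$, and put $n=2^k r$ and $$a=2n+d=2\cdot2^k r+2\cdot 2^{2k},\qquad b=2n+\frac{2n^2}{d}=2\cdot 2^k r+r^2,\qquad c=b+d=2\cdot2^kr+r^2+2\cdot2^{2k}.$$ Then $(a,b,c)$ is an IDPT. Moreover, every IDPT $(a,b,c)$ with $c-b=2\cdot 2^{2k}$ arises in this way from some such $r$.
   Context: A Diophantine Pythagorean Triangle (DPT) is a triple $(a,b,c)$ of positive integers with $a<b<c$ and $a^2+b^2=c^2$. An IDPT is a DPT with $\gcd(a,b,c)=1$. $\lceil x\rceil$ is the smallest integer $\ge x$. *)

From mathcomp Require Import all_boot.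
Set Implicit Arguments. Unset Strict Implicit. Unset Printing Implicit Defensive.

Definition DPT (a b c : nat) : Prop :=
  [/\ 0 < a, a < b, b < c & a ^ 2 + b ^ 2 = c ^ 2].

Definition IDPT (a b c : nat) : Prop :=
  DPT a b c /\ gcdn (gcdn a b) c = 1.

Definition ceil_sqrt (d : nat) : nat :=
  find (fun m => d <= m ^ 2) (iota 0 d.+1).

From mathcomp Require Import all_boot.
From mathcomp Require Import zify.

Set Implicit Arguments.
Unset Strict Implicit.
Unset Printing Implicit Defensive.

(* With t := 2^k the family reads a = 2t(r + t), b = r(r + 2t), c = b + 2t^2,
   and a^2 + b^2 = c^2 is an identity in t and r.  Conversely, a^2 + b^2 =
   (b + 2t^2)^2 forces a^2 = (2t)^2 (b + t^2), so b + t^2 is the square of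
   s := a / 2t and r := s - t recovers the parameter.  Primitivity holds
   exactly when b is odd, since a common divisor of b and c divides the power
   of two c - b; oddness of b is equivalent to oddness of r.  Finally a < b
   amounts to 2t^2 < r^2, which for odd r is d <= r^2, i.e. ceil(sqrt d) <= r. *)

Lemma ceil_sqrt_leq d r : (ceil_sqrt d <= r) = (d <= r ^ 2).
Proof.
rewrite /ceil_sqrt; set P := fun m => d <= m ^ 2.
have has_P : has P (iota 0 d.+1).
  by apply/hasP; exists d; [rewrite mem_iota /=; lia | rewrite /P; nia].
have lt_find : find P (iota 0 d.+1) < d.+1 by rewrite -[d.+1 in X in _ < X](size_iota 0) -has_find.
apply/idP/idP => [le_r | P_r].
- have := nth_find 0 has_P; rewrite nth_iota // add0n => P_find.
  by apply: leq_trans P_find _; rewrite leq_exp2r.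
- rewrite leqNgt; apply/negP => lt_r.
  have lt_rd : r < d.+1 by apply: ltn_trans lt_r lt_find.
  by have := before_find 0 lt_r; rewrite nth_iota // add0n /P P_r.
Qed.

Lemma ltn_double_odd m x : odd x -> (2 * m < x) = (2 * m <= x).
Proof.
move=> odd_x; rewrite ltn_neqAle andb_idl // => _.
by apply: contraTneq odd_x => <-; rewrite oddM.
Qed.

Lemma gcd_odd_add_pow2 a b m : odd b -> gcdn (gcdn a b) (b + 2 ^ m) = 1.
Proof.
move=> odd_b; set g := gcdn _ _.
have g_b : g %| b by rewrite /g -gcdnA; apply: dvdn_trans (dvdn_gcdr _ _) (dvdn_gcdl _ _).
have g_pow : g %| 2 ^ m by rewrite -(dvdn_addr _ g_b) dvdn_gcdr.
have : coprime g (2 ^ m).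
  apply: coprimeXr; rewrite coprimen2; apply: contraLR odd_b.
  by rewrite -!dvdn2 => g_even; apply: dvdn_trans g_even g_b.
by rewrite /coprime (gcdn_idPl g_pow) => /eqP.
Qed.

Lemma primitive_pyth_even_gap_odd a b e :
  gcdn (gcdn a b) (b + e) = 1 -> a ^ 2 + b ^ 2 = (b + e) ^ 2 -> ~~ odd e -> odd b.
Proof.
move=> g1 pyth even_e; apply/negPn/negP => even_b.
have even_c : ~~ odd (b + e) by rewrite oddD (negbTE even_b) (negbTE even_e).
have even_a : ~~ odd a.
  have := congr1 odd pyth; rewrite oddD !oddX /= (negbTE even_b) (negbTE even_c).
  by rewrite addbF => ->.
have : 2 %| gcdn (gcdn a b) (b + e) by rewrite !dvdn_gcd !dvdn2 even_a even_b even_c.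
by rewrite g1.
Qed.

Lemma sq_eq_mul_sq a m x : 0 < m -> a ^ 2 = m ^ 2 * x ->
  exists2 s, a = s * m & x = s ^ 2.
Proof.
move=> m_gt0 sq_a.
have /dvdnP [s a_eq] : m %| a by rewrite -(@dvdn_pexp2r _ _ 2) // sq_a dvdn_mulr.
exists s => //; apply/eqP; rewrite -(@eqn_pmul2l (m ^ 2)) ?expn_gt0 ?m_gt0 //.
by rewrite -sq_a a_eq expnMn mulnC.
Qed.

Section DoubleSquareGap.

Variable t : nat.
Hypothesis t_gt0 : 0 < t.

Lemma pyth_double_square_gap r :
  (2 * t * r + 2 * t ^ 2) ^ 2 + (2 * t * r + r ^ 2) ^ 2
  = (2 * t * r + r ^ 2 + 2 * t ^ 2) ^ 2.
Proof. nia. Qed.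

Lemma DPT_double_square_gap r : 2 * t ^ 2 < r ^ 2 ->
  DPT (2 * t * r + 2 * t ^ 2) (2 * t * r + r ^ 2) (2 * t * r + r ^ 2 + 2 * t ^ 2).
Proof.
move=> lt_r; split; [nia | lia | nia | exact: pyth_double_square_gap].
Qed.

Lemma IDPT_double_square_gap_param a b :
  IDPT a b (b + 2 * t ^ 2) ->
  exists r, [/\ odd r, 2 * t ^ 2 < r ^ 2, a = 2 * t * r + 2 * t ^ 2
                & b = 2 * t * r + r ^ 2].
Proof.
move=> [[_ lt_ab _ pyth] g1].
have odd_b : odd b by apply: primitive_pyth_even_gap_odd g1 pyth _; rewrite oddM.
have sq_a : a ^ 2 = (2 * t) ^ 2 * (b + t ^ 2) by nia.
have [|s a_eq sq_s] := sq_eq_mul_sq _ sq_a; first by rewrite muln_gt0.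
have [r s_eq] : exists r, s = r + t.
  by exists (s - t); rewrite subnK // -(@leq_exp2r _ _ 2) // -sq_s leq_addl.
have {}a_eq : a = 2 * t * r + 2 * t ^ 2 by rewrite a_eq s_eq; nia.
have b_eq : b = 2 * t * r + r ^ 2.
  by apply/eqP; rewrite -(eqn_add2r (t ^ 2)) sq_s s_eq; apply/eqP; nia.
exists r; split => //.
- by move: odd_b; rewrite b_eq oddD -mulnA oddM oddX.
- by move: lt_ab; rewrite a_eq b_eq ltn_add2l.
Qed.

End DoubleSquareGap.

Theorem theorem2 (k : nat) :
  let d := 2 * 2 ^ (2 * k) in
  (forall r : nat, odd r -> 0 < r -> ceil_sqrt d <= r ->
     let n := 2 ^ k * r in
     IDPT (2 * n + d) (2 * 2 ^ k * r + r ^ 2) (2 * 2 ^ k * r + r ^ 2 + d))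
  /\
  (forall a b c : nat, IDPT a b c -> c - b = d ->
     exists r : nat, [/\ odd r, 0 < r & ceil_sqrt d <= r] /\
       [/\ a = 2 * (2 ^ k * r) + d,
            b = 2 * 2 ^ k * r + r ^ 2 &
            c = 2 * 2 ^ k * r + r ^ 2 + d]).
Proof.
move=> d; set t := 2 ^ k.
have t_gt0 : 0 < t by rewrite expn_gt0.
have d_sq : d = 2 * t ^ 2 by rewrite /d [2 * k]mulnC expnM.
have d_pow : d = 2 ^ (2 * k).+1 by rewrite expnS.
split=> [r odd_r _ | a b c abc gap].
- rewrite ceil_sqrt_leq d_sq -ltn_double_odd ?oddX ?odd_r // => lt_r n.
  rewrite /n mulnA; split; first exact: DPT_double_square_gap.
  by rewrite -d_sq d_pow gcd_odd_add_pow2 // oddD oddX odd_r -mulnA oddM.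
- have [[_ _ lt_bc _] _] := abc.
  have c_eq : c = b + 2 * t ^ 2 by rewrite -d_sq; lia.
  rewrite c_eq in abc.
  have [r [odd_r lt_r a_eq b_eq]] := IDPT_double_square_gap_param t_gt0 abc.
  exists r; split; first split.
  + exact: odd_r.
  + exact: odd_gt0.
  + by rewrite ceil_sqrt_leq d_sq ltnW.
  + by rewrite d_sq mulnA c_eq a_eq b_eq.
Qed.
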